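(* Consider $n$ agents over a fixed undirected connected graph with symmetric nonnegative weights $a_{ij}$ and Laplacian $L$ with largest eigenvalue $\lambda_n$, and let $0<h<2/\lambda_n$. The states $x_i(t)\in\mathbb{R}^m$ evolve by $x_i(t+1)=x_i(t)+u_i(t)$ with $$y_i(t)=x_i(t)+h\sum_{j\in N_i}a_{ij}(x_j(t)-x_i(t)),\ \nabla_i(t)=\beta(t)\nabla g_i^+(y_i(t)),\ \xi_i(t)=y_i(t)-\nabla_i(t),$$ $$\varphi_i(t)=\alpha(t)\big(\xi_i(t)-P_{X_i}(\xi_i(t))\big),\ \phi_i(t)=-\nabla_i(t)-\varphi_i(t),\ u_i(t)=h\sum_{j\in N_i}a_{ij}(x_j(t)-x_i(t))+\phi_i(t),$$ for given real sequences $\alpha(t),\beta(t)$. If $\lim_{t\to\infty}\phi_i(t)=0$ for every $i$, then the agents reach consensus asymptotically, i.e. $\lim_{t\to\infty}\|x_i(t)-x_j(t)\|=0$ for all $i,j$.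
   Context: $g_i:\mathbb{R}^m\to\mathbb{R}$ convex continuous, $X_i\subset\mathbb{R}^m$ closed convex, $g_i^+=\max[g_i,0]$, $\nabla g_i^+(y)$ a subgradient of $g_i^+$ at $y$, $P_{X_i}$ Euclidean projection onto $X_i$. Laplacian $L=(l_{ij})$: $l_{ij}=-a_{ij}$ for $i\neq j$, $l_{ii}=\sum_j a_{ij}$. *)

From HB Require Import structures.
From mathcomp Require Import all_boot all_order all_algebra.
From mathcomp Require Import all_classical all_reals all_analysis.
Set Implicit Arguments. Unset Strict Implicit. Unset Printing Implicit Defensive.
Import Order.TTheory GRing.Theory Num.Theory.
Import numFieldNormedType.Exports.
Local Open Scope classical_set_scope.
Local Open Scope ring_scope.

Section Defs.
Variable R : realType.

Definition dotv m (x z : 'rV[R]_m) : R := \sum_(k < m) x 0 k * z 0 k.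
Definition enorm m (x : 'rV[R]_m) : R := Num.sqrt (dotv x x).

Definition convex_fun m (g : 'rV[R]_m -> R) : Prop :=
  forall (x z : 'rV[R]_m) (s : R), 0 <= s -> s <= 1 ->
    g (s *: x + (1 - s) *: z) <= s * g x + (1 - s) * g z.
Definition gplus m (g : 'rV[R]_m -> R) : 'rV[R]_m -> R := fun y => Num.max (g y) 0.

Definition is_subgradient m (f : 'rV[R]_m -> R) (y d : 'rV[R]_m) : Prop :=
  forall z : 'rV[R]_m, f y + dotv d (z - y) <= f z.

Definition is_proj m (X : set 'rV[R]_m) (P : 'rV[R]_m -> 'rV[R]_m) : Prop :=
  forall x : 'rV[R]_m, X (P x) /\ forall z, X z -> enorm (x - P x) <= enorm (x - z).

Definition laplacian n (a : 'M[R]_n) : 'M[R]_n :=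
  \matrix_(i, j) (if i == j then \sum_(k < n) a i k else - a i j).

Definition nbr n (a : 'M[R]_n) : rel 'I_n := fun i j => (j != i) && (0 < a i j).

Definition connected_graph n (a : 'M[R]_n) : Prop :=
  forall i j : 'I_n, connect (nbr a) i j.

Definition cons_term n m (a : 'M[R]_n) (h : R) (x : 'I_n -> 'rV[R]_m) (i : 'I_n)
  : 'rV[R]_m := h *: \sum_(j < n | nbr a i j) a i j *: (x j - x i).

Variables (n m : nat) (a : 'M[R]_n) (h : R) (P : 'I_n -> 'rV[R]_m -> 'rV[R]_m)
  (dg : 'I_n -> 'rV[R]_m -> 'rV[R]_m) (alpha beta : nat -> R)
  (x : nat -> 'I_n -> 'rV[R]_m).

Definition y_ t i := x t i + cons_term a h (x t) i.
Definition nabla_ t i := beta t *: dg i (y_ t i).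
Definition xi_ t i := y_ t i - nabla_ t i.
Definition varphi_ t i := alpha t *: (xi_ t i - P i (xi_ t i)).
Definition phi_ t i := - nabla_ t i - varphi_ t i.
Definition u_ t i := cons_term a h (x t) i + phi_ t i.

End Defs.

From HB Require Import structures.
From mathcomp Require Import all_boot all_order all_algebra.
From mathcomp Require Import all_classical all_reals all_analysis.
From mathcomp Require Import ring lra.
Set Implicit Arguments. Unset Strict Implicit. Unset Printing Implicit Defensive.
Import Order.TTheory GRing.Theory Num.Theory.
Import numFieldNormedType.Exports.
Local Open Scope classical_set_scope.
Local Open Scope ring_scope.

(* Stack the k-th coordinates of the agents into a vector z of R^n.  Terms with
   j = i contribute nothing to the consensus term, so the update reads
   z(t+1) = z(t) (I - hL) + f(t), where L is the Laplacian of the graph with its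
   self-loops removed and f(t) -> 0 collects the coordinates of the phi_i(t).
   The Laplacian of the statement keeps the loops (l_ii includes a_ii), but it
   dominates L as a quadratic form, so 0 <= L <= lambda_n.  Connectivity makes L
   definite on the orthogonal complement of the constant vectors, and
   h lambda_n < 2 then makes I - hL a strict contraction there.  Hence the
   disagreement e(t) = z(t) - mean(z(t)) 1 satisfies
   |e(t+1)|^2 <= r |e(t)|^2 + C |f(t)|^2 with r < 1, which forces e(t) -> 0. *)

Lemma quadratic_ge0_linear_coef_eq0 (R : realFieldType) (e F : R) :
  (forall t, 0 <= t * e + t ^+ 2 * F) -> e = 0.
Proof.
move=> H; set D := `|F| + 1.
have D0 : 0 < D by rewrite ltr_pwDr.
have : 0 <= e ^+ 2 * (F - D) / D ^+ 2.
  by have := H (- e / D); congr (0 <= _); field; rewrite gt_eqF.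
rewrite pmulr_lge0 ?invr_gt0 ?exprn_gt0 // => eFD.
have FD : F - D <= -1 by have := ler_norm F; rewrite /D; lra.
by apply/eqP; rewrite -sqrf_eq0 eq_le sqr_ge0 andbT; nra.
Qed.

Section InnerProduct.
Variables (R : realType) (k : nat).
Implicit Types (u v w z : 'rV[R]_k) (S : 'M[R]_k).

Lemma dotvC u w : dotv u w = dotv w u.
Proof. by apply: eq_bigr => i _; rewrite mulrC. Qed.

Lemma dotvDl u v w : dotv (u + v) w = dotv u w + dotv v w.
Proof. by rewrite /dotv -big_split; apply: eq_bigr => i _; rewrite mxE mulrDl. Qed.

Lemma dotvDr u v w : dotv w (u + v) = dotv w u + dotv w v.
Proof. by rewrite dotvC dotvDl !(dotvC w). Qed.

Lemma dotvZl c u w : dotv (c *: u) w = c * dotv u w.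
Proof. by rewrite /dotv mulr_sumr; apply: eq_bigr => i _; rewrite mxE mulrA. Qed.

Lemma dotvZr c u w : dotv w (c *: u) = c * dotv w u.
Proof. by rewrite dotvC dotvZl dotvC. Qed.

Lemma dotvBl u v w : dotv (u - v) w = dotv u w - dotv v w.
Proof. by rewrite dotvDl -scaleN1r dotvZl mulN1r. Qed.

Lemma dotvBr u v w : dotv w (u - v) = dotv w u - dotv w v.
Proof. by rewrite dotvC dotvBl !(dotvC w). Qed.

Lemma dotv0l w : dotv 0 w = 0.
Proof. by rewrite -(scale0r 0) dotvZl mul0r. Qed.

Lemma dotv0r w : dotv w 0 = 0.
Proof. by rewrite dotvC dotv0l. Qed.

Lemma sqr_coord_le_dotv v j : v 0 j ^+ 2 <= dotv v v.
Proof.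
rewrite /dotv (bigD1 j) //= -expr2 lerDl.
by apply: sumr_ge0 => i _; rewrite -expr2 sqr_ge0.
Qed.

Lemma dotv_ge0 v : 0 <= dotv v v.
Proof. by apply: sumr_ge0 => i _; rewrite -expr2 sqr_ge0. Qed.

Lemma dotv_eq0 v : (dotv v v == 0) = (v == 0).
Proof.
apply/eqP/eqP => [v0|->]; last exact: dotv0l.
apply/rowP => j; rewrite mxE; apply/eqP; rewrite -sqrf_eq0 eq_le sqr_ge0 andbT.
by rewrite -v0 sqr_coord_le_dotv.
Qed.

Lemma dotv_gt0 v : v != 0 -> 0 < dotv v v.
Proof. by rewrite lt_def dotv_ge0 dotv_eq0 andbT. Qed.

Lemma dotv_mulmx_sym S u w : S^T = S -> dotv (u *m S) w = dotv u (w *m S).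
Proof.
move=> sS; rewrite /dotv; under eq_bigr do rewrite mxE mulr_suml.
rewrite exchange_big /=; apply: eq_bigr => i _.
rewrite mxE mulr_sumr; apply: eq_bigr => j _.
by rewrite -[in RHS]sS mxE; ring.
Qed.

Lemma dotv_young u w d : 0 < d ->
  dotv (u + w) (u + w) <= (1 + d) * dotv u u + (1 + d^-1) * dotv w w.
Proof.
move=> d0; rewrite !(dotvDl, dotvDr) (dotvC w u).
suff : 2 * dotv u w <= d * dotv u u + d^-1 * dotv w w by lra.
rewrite /dotv !mulr_sumr -big_split; apply: ler_sum => i _ /=.
have : 0 <= d^-1 * (d * u 0 i - w 0 i) ^+ 2 by rewrite mulr_ge0 ?invr_ge0 ?sqr_ge0 ?ltW.
have -> : d^-1 * (d * u 0 i - w 0 i) ^+ 2 =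
  d * (u 0 i * u 0 i) + d^-1 * (w 0 i * w 0 i) - 2 * (u 0 i * w 0 i).
  by field; rewrite gt_eqF.
lra.
Qed.

Lemma continuous_dotv_mulmx S : continuous (fun v => dotv (v *m S) v).
Proof.
have coordC j : continuous (fun v : 'rV[R]_k => v 0 j).
  exact: (@coord_continuous R 1 k 0 j).
have sumC (I : finType) (F : I -> 'rV[R]_k -> R) :
    (forall i, continuous (F i)) -> continuous (fun v => \sum_i F i v).
  move=> FC.
  exact: (@continuous_big _ _ +%R 0 xpredT add_continuous _ _ F (fun i _ => FC i)).
rewrite /dotv; under eq_fun do under eq_bigr do rewrite mxE.
apply: (sumC) => j v; apply: continuousM; last exact: coordC.
apply: (sumC) => i {}v; apply: continuousM; [exact: coordC | exact: cst_continuous].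
Qed.

Lemma continuous_dotv : continuous (fun v => dotv v v).
Proof.
have -> : (fun v => dotv v v) = (fun v => dotv (v *m 1%:M) v).
  by apply/funext => v; rewrite mulmx1.
exact: continuous_dotv_mulmx.
Qed.

Lemma const_row_eq0 u :
  (forall i j, u 0 i = u 0 j) -> dotv u (const_mx 1) = 0 -> u = 0.
Proof.
case: k u => [|k'] u ucst; first by rewrite !thinmx0.
rewrite /dotv; under eq_bigr do rewrite mxE mulr1 (ucst _ ord0).
rewrite sumr_const card_ord => /eqP; rewrite mulrn_eq0 /= => /eqP u0.
by apply/rowP => j; rewrite (ucst _ ord0) u0 mxE.
Qed.

Lemma psd_mulmx_eq0 S (c : 'rV[R]_k) : S^T = S ->
  (forall z, 0 <= dotv (z *m S) z) -> dotv (c *m S) c = 0 -> c *m S = 0.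
Proof.
move=> sS psd cSc; apply/eqP; rewrite -dotv_eq0; apply/eqP.
set w := c *m S.
suff : 2 * dotv w w = 0 by move/eqP; rewrite mulf_eq0 pnatr_eq0 => /eqP.
apply: (@quadratic_ge0_linear_coef_eq0 _ _ (dotv (w *m S) w)) => t.
have wSc : dotv (w *m S) c = dotv w w by rewrite dotv_mulmx_sym.
have := psd (c + t *: w); rewrite mulmxDl -scalemxAl.
rewrite !(dotvDl, dotvDr, dotvZl, dotvZr) cSc wSc.
by congr (0 <= _); ring.
Qed.

Lemma bounded_unit_sphere : bounded_set [set v : 'rV[R]_k | dotv v v = 1].
Proof.
rewrite /= /bounded_near; near=> M => v /= v1.
change (mx_norm v <= M); rewrite mx_normrE; apply: bigmax_le => [|ij _].
  by near: M; apply: nbhs_pinfty_ge; rewrite num_real.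
rewrite (ord1 ij.1); have := sqr_coord_le_dotv v ij.2.
rewrite v1 -real_normK ?num_real //.
rewrite -ler_sqrt // sqrtr1 sqrtr_sqr normr_id => v1j.
by apply: le_trans v1j _; near: M; apply: nbhs_pinfty_ge; rewrite num_real.
Unshelve. all: end_near. Qed.

Lemma compact_unit_sphere : compact [set v : 'rV[R]_k | dotv v v = 1].
Proof.
apply: bounded_closed_compact; first exact: bounded_unit_sphere.
suff : closed ((fun v : 'rV[R]_k => dotv v v) @^-1` [set x | x = 1]) by [].
by move: continuous_dotv => /continuous_closedP; apply; exact: closed_eq.
Qed.

End InnerProduct.

Section TopEigenvalue.
Variables (R : realType) (k : nat) (S : 'M[R]_k.+1).
Hypothesis sS : S^T = S.

Lemma symmetric_top_eigen : exists q (v : 'rV[R]_k.+1),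
  [/\ v != 0, v *m S = q *: v & forall z, dotv (z *m S) z <= q * dotv z z].
Proof.
pose A := [set v : 'rV[R]_k.+1 | dotv v v = 1].
pose f v := dotv (v *m S) v.
have A0 : A !=set0.
  exists (const_mx (Num.sqrt k.+1%:R)^-1); rewrite /A /= /dotv.
  under eq_bigr do rewrite !mxE -expr2 exprVn sqr_sqrtr ?ler0n //.
  by rewrite sumr_const card_ord -[_ *+ _]mulr_natr mulVf ?pnatr_eq0.
(* c maximises the Rayleigh quotient, so the form of f c *: 1 - S is
   nonnegative and vanishes at c. *)
have [c /[!inE] c1 cmax] := EVT_max_rV A0 (@compact_unit_sphere R k.+1)
  (continuous_subspaceT (continuous_dotv_mulmx (S := S))).
have c0 : c != 0 by rewrite -dotv_eq0 c1 oner_neq0.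
have ray z : f z <= f c * dotv z z.
  have [->|z0] := eqVneq z 0; first by rewrite /f mul0mx !dotv0l mulr0.
  have zz := dotv_gt0 z0; set s := (Num.sqrt (dotv z z))^-1.
  have s2 : s ^+ 2 = (dotv z z)^-1 by rewrite exprVn sqr_sqrtr ?ltW.
  have := cmax (s *: z); rewrite !inE /A /f /= -scalemxAl !(dotvZl, dotvZr).
  rewrite !mulrA -expr2 s2 mulVf ?gt_eqF // => /(_ erefl).
  by rewrite mulrC ler_pdivrMr // mulrC.
exists (f c), c; split=> //.
pose T := f c *: 1%:M - S.
have cT : c *m T = 0.
  apply: psd_mulmx_eq0.
  - by rewrite linearB /= linearZ /= trmx1 sS.
  - by move=> z; rewrite mulmxBr -scalemxAr mulmx1 dotvBl dotvZl subr_ge0 ray.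
  - by rewrite mulmxBr -scalemxAr mulmx1 dotvBl dotvZl c1 mulr1 subrr.
by move: cT; rewrite mulmxBr -scalemxAr mulmx1 => /eqP; rewrite subr_eq0 => /eqP.
Qed.

End TopEigenvalue.

Definition coord_row (R : realType) n m (x : 'I_n -> 'rV[R]_m) (k : 'I_m)
  : 'rV[R]_n := \row_i x i 0 k.

Section LooplessLaplacian.
Variables (R : realType) (n : nat) (a : 'M[R]_n).

Definition loopless_laplacian : 'M[R]_n :=
  \matrix_(i, j) ((i == j)%:R * \sum_l a i l - a i j).

Local Notation L := loopless_laplacian.

Lemma laplacianE : laplacian a = L + diag_mx (\row_i a i i).
Proof.
apply/matrixP => i j; rewrite !mxE.
by case: eqVneq => [->|_]; rewrite ?mul1r ?subrK // mul0r sub0r addr0.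
Qed.

Hypothesis asym : forall i j, a i j = a j i.
Hypothesis apos : forall i j, 0 <= a i j.

Lemma loopless_laplacianE (u : 'rV[R]_n) j :
  (u *m L) 0 j = \sum_i a i j * (u 0 j - u 0 i).
Proof.
rewrite mxE; under eq_bigr do rewrite mxE mulrBr.
under [RHS]eq_bigr do rewrite mulrBr.
rewrite !sumrB; congr (_ - _); last by apply: eq_bigr => i _; rewrite mulrC.
rewrite (bigD1 j) //= [X in _ + X]big1 => [|i /negPf ->]; last by rewrite mul0r mulr0.
by rewrite eqxx mul1r addr0 mulrC mulr_suml; apply: eq_bigr => i _; rewrite asym.
Qed.

Lemma tr_loopless_laplacian : L^T = L.
Proof.
apply/matrixP => i j; rewrite !mxE eq_sym.
by case: eqVneq => [->|_]; rewrite // !mul0r asym.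
Qed.

Lemma tr_laplacian : (laplacian a)^T = laplacian a.
Proof. by rewrite laplacianE linearD /= tr_loopless_laplacian tr_diag_mx. Qed.

Lemma dotv_loopless_laplacian_le (z : 'rV[R]_n) :
  dotv (z *m L) z <= dotv (z *m laplacian a) z.
Proof.
rewrite laplacianE mulmxDr dotvDl mul_mx_diag lerDl.
by apply: sumr_ge0 => i _; rewrite !mxE mulrAC mulr_ge0 // -expr2 sqr_ge0.
Qed.

Lemma dotv_loopless_laplacian (u : 'rV[R]_n) :
  2 * dotv (u *m L) u = \sum_j \sum_i a i j * (u 0 j - u 0 i) ^+ 2.
Proof.
have Lu1 : dotv (u *m L) u = \sum_j \sum_i a i j * (u 0 j - u 0 i) * u 0 j.
  by apply: eq_bigr => j _; rewrite loopless_laplacianE mulr_suml.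
have Lu2 : dotv (u *m L) u = \sum_j \sum_i a i j * (u 0 i - u 0 j) * u 0 i.
  rewrite Lu1 exchange_big /=; apply: eq_bigr => j _; apply: eq_bigr => i _.
  by rewrite asym.
rewrite mulr2n mulrDl mul1r {1}Lu1 Lu2 -big_split; apply: eq_bigr => j _.
by rewrite -big_split; apply: eq_bigr => i _ /=; ring.
Qed.

Lemma loopless_laplacian_psd (u : 'rV[R]_n) : 0 <= dotv (u *m L) u.
Proof.
rewrite -(pmulr_rge0 _ (ltr0Sn R 1)) dotv_loopless_laplacian.
by do 2![apply: sumr_ge0 => ? _]; rewrite mulr_ge0 ?sqr_ge0.
Qed.

Lemma const_mx1_loopless_laplacian : (const_mx 1 : 'rV[R]_n) *m L = 0.
Proof.
apply/rowP => j; rewrite loopless_laplacianE [RHS]mxE.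
by apply: big1 => i _; rewrite !mxE subrr mulr0.
Qed.

Lemma loopless_laplacian_ker (u : 'rV[R]_n) : connected_graph a ->
  dotv (u *m L) u = 0 -> forall i j, u 0 i = u 0 j.
Proof.
move=> conn uLu.
have terms_ge0 j i : 0 <= a i j * (u 0 j - u 0 i) ^+ 2 by rewrite mulr_ge0 ?sqr_ge0.
have sum0 : \sum_j \sum_i a i j * (u 0 j - u 0 i) ^+ 2 = 0.
  by rewrite -dotv_loopless_laplacian uLu mulr0.
have edge i j : nbr a i j -> u 0 i = u 0 j.
  case/andP=> _ aij.
  have := psumr_eq0P (fun j _ => sumr_ge0 _ (fun i _ => terms_ge0 j i)) sum0 (i := j) isT.
  move/(psumr_eq0P (fun i _ => terms_ge0 j i))/(_ i isT)/eqP.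
  by rewrite mulf_eq0 gt_eqF //= sqrf_eq0 subr_eq0 => /eqP.
move=> i j; have /connectP[p + ->] := conn i j.
by elim: p i => [|y p IH] i //= /andP[/edge -> /IH].
Qed.

Lemma cons_termE h m (x : 'I_n -> 'rV[R]_m) l k :
  cons_term a h x l 0 k = - h * (coord_row x k *m L) 0 l.
Proof.
rewrite /cons_term loopless_laplacianE !mxE summxE mulNr -mulrN -sumrN.
congr (_ * _); rewrite big_mkcond /=; apply: eq_bigr => i _.
rewrite !mxE asym /nbr; case: eqVneq => [->|_] /=; first by rewrite !subrr !mulr0 oppr0.
rewrite -(asym l i) lt_def apos andbT; case: eqP => [->|_] /=.
  by rewrite mul0r oppr0.
by rewrite -mulrN opprB.
Qed.

End LooplessLaplacian.

Section Contraction.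
Variables (R : realType) (k : nat) (L : 'M[R]_k.+1) (h lam : R).
Hypothesis sL : L^T = L.
Hypothesis psdL : forall u, 0 <= dotv (u *m L) u.
Hypothesis kerL : forall u, dotv u (const_mx 1) = 0 -> dotv (u *m L) u = 0 -> u = 0.
Hypothesis L1 : (const_mx 1 : 'rV[R]_k.+1) *m L = 0.
Hypothesis boundL : forall z, dotv (z *m L) z <= lam * dotv z z.
Hypothesis h_gt0 : 0 < h.
Hypothesis hlam : h * lam < 2.

Implicit Types (u v e : 'rV[R]_k.+1) (q : R).

Local Notation ones := (const_mx 1 : 'rV[R]_k.+1).
Local Notation W := (1%:M - h *: L).

Lemma mulmx_step u : u *m W = u - h *: (u *m L).
Proof. by rewrite mulmxBr mulmx1 scalemxAr. Qed.

Lemma tr_step : W^T = W.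
Proof. by rewrite linearB /= linearZ /= trmx1 sL. Qed.

Lemma ones_step : ones *m W = ones.
Proof. by rewrite mulmx_step L1 scaler0 subr0. Qed.

Lemma dotv_step_ones u : dotv (u *m W) ones = dotv u ones.
Proof. by rewrite dotv_mulmx_sym ?tr_step // ones_step. Qed.

(* For q >= 1, u = v W + sqrt q v satisfies u W = sqrt q u: either u = 0 and
   v W = - sqrt q v, against h lam < 2, or u <> 0 and h u L = (1 - sqrt q) u
   forces u L u = 0, against the triviality of the kernel of L on 1^perp. *)
Lemma step_sqr_eigenvalue_lt1 q v : v != 0 -> dotv v ones = 0 ->
  v *m W *m W = q *: v -> q < 1.
Proof.
move=> v0 v1 vWW; rewrite ltNge; apply/negP => q1.
set s := Num.sqrt q.
have s2 : s ^+ 2 = q by rewrite sqr_sqrtr // (le_trans ler01).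
have s1 : 1 <= s by rewrite -(sqrtr1 R) ler_sqrt // (le_trans ler01).
set u := v *m W + s *: v.
have uW : u *m W = s *: u.
  by rewrite mulmxDl vWW -scalemxAl scalerDr scalerA -expr2 s2 addrC.
have [u0|u0] := eqVneq u 0.
  have vL : h *: (v *m L) = (1 + s) *: v.
    move/eqP: u0; rewrite /u mulmx_step addrAC subr_eq0 => /eqP <-.
    by rewrite scalerDl scale1r.
  have := congr1 (fun z => dotv z v) vL; rewrite /= !dotvZl => vLv.
  have vv := dotv_gt0 v0.
  have : (1 + s) * dotv v v <= h * lam * dotv v v.
    by rewrite -vLv -mulrA ler_pM2l.
  by rewrite ler_pM2r // => /le_lt_trans/(_ hlam); lra.
have uL : h *: (u *m L) = (1 - s) *: u.
  by rewrite scalerBl scale1r -uW mulmx_step opprB addrC subrK.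
have := congr1 (fun z => dotv z u) uL; rewrite /= !dotvZl => uLu.
have uLu0 : dotv (u *m L) u = 0.
  apply/eqP; rewrite eq_le psdL andbT -(ler_pM2l h_gt0) mulr0 uLu.
  by rewrite mulr_le0_ge0 ?dotv_ge0 // subr_le0.
have u1 : dotv u ones = 0 by rewrite dotvDl dotv_step_ones dotvZl v1 mulr0 addr0.
by move: u0; rewrite (kerL u1 uLu0) eqxx.
Qed.

Lemma step_contraction : exists2 q, 0 <= q < 1 &
  forall e, dotv e ones = 0 -> dotv (e *m W) (e *m W) <= q * dotv e e.
Proof.
pose J : 'M[R]_k.+1 := const_mx 1.
have eJ e : e *m J = dotv e ones *: ones.
  by apply/rowP => j; rewrite !mxE mulr1; apply: eq_bigr => i _; rewrite !mxE.
have onesJ : ones *m J = k.+1%:R *: ones.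
  rewrite eJ /dotv; under eq_bigr do rewrite !mxE mulr1.
  by rewrite sumr_const card_ord.
(* Subtracting J sends the constant vectors to the eigenvalue -k of S, which
   confines the eigenvectors for eigenvalues >= 1 to 1^perp. *)
pose S := W *m W - J.
have sS : S^T = S by rewrite linearB /= trmx_mul tr_step trmx_const.
have [q [v [v0 vS qmax]]] := symmetric_top_eigen sS.
have WWe e : dotv e ones = 0 -> e *m W *m W = e *m S.
  by move=> e1; rewrite /S [RHS]mulmxBr eJ e1 scale0r subr0 mulmxA.
exists (Num.max q 0); last first.
  move=> e e1; rewrite dotv_mulmx_sym ?tr_step // dotvC WWe //.
  by apply: le_trans (qmax e) _; rewrite ler_wpM2r ?dotv_ge0 ?le_max ?lexx.
rewrite le_max lexx orbT /= gt_max ltr01 andbT ltNge; apply/negP => q1.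
have v1 : dotv v ones = 0.
  have : q * dotv v ones = - k%:R * dotv v ones.
    rewrite -dotvZl -vS dotv_mulmx_sym // /S mulmxBr mulmxA !ones_step onesJ.
    by rewrite dotvBr dotvZr -natr1; ring.
  move/eqP; rewrite -subr_eq0 -mulrBl mulf_eq0 => /orP[|/eqP //].
  by rewrite opprK gt_eqF //; have := ler0n R k; lra.
have vWW : v *m W *m W = q *: v by rewrite WWe.
by move: (step_sqr_eigenvalue_lt1 v0 v1 vWW); rewrite ltNge q1.
Qed.

End Contraction.

Section Rejection.
Variables (R : realType) (k : nat).
Implicit Types (u v w : 'rV[R]_k) (W : 'M[R]_k).

Definition reject u w := u - (dotv u w / dotv w w) *: w.

Lemma dotv_reject u w : dotv (reject u w) w = 0.
Proof.
rewrite dotvBl dotvZl; have [->|w0] := eqVneq w 0; first by rewrite !dotv0r mulr0 subr0.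
by rewrite divfK ?subrr // gt_eqF ?dotv_gt0.
Qed.

Lemma dotv_reject_le u w : dotv (reject u w) (reject u w) <= dotv u u.
Proof.
set c := dotv u w / dotv w w.
have -> : dotv u u = dotv (reject u w) (reject u w) + c ^+ 2 * dotv w w.
  have uE : u = reject u w + c *: w by rewrite subrK.
  rewrite {1 2}uE; move: (reject u w) (dotv_reject u w) => r rw.
  by rewrite !(dotvDl, dotvDr, dotvZl, dotvZr) (dotvC w) rw; ring.
by rewrite lerDl mulr_ge0 ?sqr_ge0 ?dotv_ge0.
Qed.

Lemma rejectD u v w : reject (u + v) w = reject u w + reject v w.
Proof. by rewrite /reject dotvDl mulrDl scalerDl opprD addrACA. Qed.

Lemma reject_mulmx u w W : W^T = W -> w *m W = w ->
  reject (u *m W) w = reject u w *m W.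
Proof.
move=> sW wW; rewrite /reject dotv_mulmx_sym // wW.
by rewrite mulmxBl -scalemxAl wW.
Qed.

End Rejection.

Lemma contractive_ineq_cvg0 (R : realType) (E G : nat -> R) r : 0 <= r -> r < 1 ->
  (forall t, 0 <= E t) -> (forall t, E t.+1 <= r * E t + G t) ->
  G t @[t --> \oo] --> 0 -> E t @[t --> \oo] --> 0.
Proof.
move=> r0 r1 E0 Erec G0; apply/cvgr0Pnorm_le => eps eps0.
have d0 : 0 < eps * (1 - r) / 2 by rewrite divr_gt0 // mulr_gt0 // subr_gt0.
have [N _ GN] := (cvgr0Pnorm_le _).1 G0 _ d0.
have geo j : E (j + N)%N <= r ^+ j * E N + eps / 2.
  elim: j => [|j IH]; first by rewrite add0n expr0 mul1r lerDl divr_ge0 ?ltW.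
  have GjN : G (j + N)%N <= eps * (1 - r) / 2.
    by apply: le_trans (ler_norm _) (GN _ _); rewrite /= leq_addl.
  have := ler_wpM2l r0 IH; rewrite addSn exprS.
  by have := Erec (j + N)%N; lra.
have rE : r ^+ j * E N @[j --> \oo] --> 0.
  by rewrite -(mul0r (E N)); apply: cvgMr_tmp; apply: cvg_expr; rewrite ger0_norm.
have e2 : 0 < eps / 2 by rewrite divr_gt0.
have [K _ rK] := (cvgr0Pnorm_le _).1 rE _ e2.
exists (K + N)%N => // t /= tKN.
have Nt : (N <= t)%N := leq_trans (leq_addl K N) tKN.
have Kt : (K <= t - N)%N by rewrite leq_subRL // addnC.
rewrite ger0_norm // -(subnK Nt).
have := rK _ Kt; have := geo (t - N)%N; have := ler_norm (r ^+ (t - N) * E N).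
lra.
Qed.


Section Consensus.
Variables (R : realType) (n m : nat) (a : 'M[R]_n.+1) (h lam : R).
Variables (x p : nat -> 'I_n.+1 -> 'rV[R]_m).
Hypothesis asym : forall i j, a i j = a j i.
Hypothesis apos : forall i j, 0 <= a i j.
Hypothesis conn : connected_graph a.
Hypothesis lap_bound : forall z, dotv (z *m laplacian a) z <= lam * dotv z z.
Hypothesis h_gt0 : 0 < h.
Hypothesis hlam : h * lam < 2.
Hypothesis x_step : forall t i, x t.+1 i = x t i + cons_term a h (x t) i + p t i.
Hypothesis p_cvg0 : forall i, p t i @[t --> \oo] --> (0 : 'rV[R]_m).

Local Notation L := (loopless_laplacian a).
Local Notation W := (1%:M - h *: L).
Local Notation ones := (const_mx 1 : 'rV[R]_n.+1).

Definition disagreement t :=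
  \sum_k dotv (reject (coord_row (x t) k) ones) (reject (coord_row (x t) k) ones).

Lemma coord_row_step k t :
  coord_row (x t.+1) k = coord_row (x t) k *m W + coord_row (p t) k.
Proof.
apply/rowP => l; rewrite [LHS]mxE x_step [LHS]mxE [in LHS]mxE cons_termE //.
by rewrite mulmx_step !mxE mulNr.
Qed.

Lemma disagreement_ineq : exists r C, [/\ 0 <= r, r < 1 & forall t,
  disagreement t.+1 <= r * disagreement t + C * \sum_i dotv (p t i) (p t i)].
Proof.
have sL := tr_loopless_laplacian asym.
have L1 := const_mx1_loopless_laplacian asym.
have kerL u : dotv u ones = 0 -> dotv (u *m L) u = 0 -> u = 0.
  by move=> u1 /(loopless_laplacian_ker asym apos conn) /const_row_eq0; apply.
have boundL z : dotv (z *m L) z <= lam * dotv z z.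
  exact: le_trans (dotv_loopless_laplacian_le apos z) (lap_bound z).
have [q /andP[q0 q1] contr] :=
  step_contraction sL (loopless_laplacian_psd asym apos) kerL L1 boundL h_gt0 hlam.
pose d := (1 - q) / 2.
have d0 : 0 < d by rewrite divr_gt0 // subr_gt0.
have d1 : 0 <= 1 + d by rewrite addr_ge0 ?ltW.
exists ((1 + d) * q), (1 + d^-1); split; first exact: mulr_ge0.
  rewrite -subr_gt0.
  have -> : 1 - (1 + d) * q = (1 - q) * (2 - q) / 2 by rewrite /d; field.
  by rewrite divr_gt0 // mulr_gt0 // subr_gt0 // (lt_trans q1) ?ltr1n.
move=> t; have -> : \sum_i dotv (p t i) (p t i) =
    \sum_k dotv (coord_row (p t) k) (coord_row (p t) k).
  by rewrite exchange_big; apply: eq_bigr => k _; apply: eq_bigr => i _; rewrite !mxE.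
rewrite /disagreement !mulr_sumr -big_split; apply: ler_sum => k _ /=.
rewrite coord_row_step rejectD reject_mulmx ?tr_step ?ones_step //.
apply: le_trans (dotv_young _ _ d0) _; apply: lerD.
  by rewrite -mulrA; apply: ler_wpM2l => //; apply: contr; exact: dotv_reject.
by apply: ler_wpM2l; [rewrite addr_ge0 ?invr_ge0 ?ltW | exact: dotv_reject_le].
Qed.

Lemma disagreement_cvg0 : disagreement t @[t --> \oo] --> 0.
Proof.
have p_sqr_cvg0 : \sum_i dotv (p t i) (p t i) @[t --> \oo] --> 0.
  have := @cvg_big _ _ +%R 0 xpredT add_continuous _ \oo (index_enum 'I_n.+1)
    (fun i t => dotv (p t i) (p t i)) (fun=> 0).
  rewrite big1 //; apply=> // i _.
  rewrite -(dotv0l (0 : 'rV[R]_m)).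
  exact: (continuous_cvg _ (@continuous_dotv R m 0) (p_cvg0 i)).
have [r [C [r0 r1 ineq]]] := disagreement_ineq.
apply: (contractive_ineq_cvg0 r0 r1 _ ineq).
  by move=> t; apply: sumr_ge0 => k _; exact: dotv_ge0.
by rewrite -[X in _ --> X](mulr0 C); apply: cvgMl_tmp.
Qed.

Lemma dist_le_disagreement i j t :
  dotv (x t i - x t j) (x t i - x t j) <= 4 * disagreement t.
Proof.
rewrite [X in X <= _]/dotv /disagreement mulr_sumr; apply: ler_sum => k _.
set e := reject _ _.
have -> : (x t i - x t j) 0 k = e 0 i - e 0 j by rewrite /e /reject !mxE; ring.
by have := sqr_coord_le_dotv e i; have := sqr_coord_le_dotv e j; nra.
Qed.

Lemma consensus i j : enorm (x t i - x t j) @[t --> \oo] --> 0.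
Proof.
have dist_cvg0 : dotv (x t i - x t j) (x t i - x t j) @[t --> \oo] --> 0.
  apply: (@squeeze_cvgr _ _ _ _ (cst 0) (fun t => 4 * disagreement t)).
  - by near=> t; rewrite dotv_ge0 dist_le_disagreement.
  - exact: cvg_cst.
  - by rewrite -(mulr0 4); apply: cvgMl_tmp; exact: disagreement_cvg0.
by rewrite -sqrtr0; apply: cvg_comp dist_cvg0 (@sqrt_continuous R 0).
Unshelve. all: end_near. Qed.

End Consensus.

Theorem proposition3 (R : realType) (n m : nat) (a : 'M[R]_n)
  (g : 'I_n -> 'rV[R]_m -> R) (X : 'I_n -> set 'rV[R]_m)
  (P : 'I_n -> 'rV[R]_m -> 'rV[R]_m) (dg : 'I_n -> 'rV[R]_m -> 'rV[R]_m)
  (lam h : R) (alpha beta : nat -> R) (x : nat -> 'I_n -> 'rV[R]_m) :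
  (forall i j, a i j = a j i) ->
  (forall i j, 0 <= a i j) ->
  connected_graph a ->
  (forall i, convex_fun (g i) /\ continuous (g i)) ->
  (forall i, closed (X i) /\ convex_set (X i)) ->
  (forall i, is_proj (X i) (P i)) ->
  (forall i y, is_subgradient (gplus (g i)) y (dg i y)) ->
  eigenvalue (laplacian a) lam ->
  (forall mu, eigenvalue (laplacian a) mu -> mu <= lam) ->
  0 < h -> h < 2 / lam ->
  (forall t i, x t.+1 i = x t i + u_ a h P dg alpha beta x t i) ->
  (forall i, phi_ a h P dg alpha beta x t i @[t --> \oo] --> (0 : 'rV[R]_m)) ->
  forall i j, enorm (x t i - x t j) @[t --> \oo] --> (0 : R).
Proof.
(* The objective functions, constraint sets, projections and subgradients
   only shape phi, whose convergence to 0 is assumed. *)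
move=> asym apos conn _ _ _ _ lam_eig lam_max h_gt0 h_lt x_step phi_cvg0.
case: n => [|n] in a g X P dg x asym apos conn lam_eig lam_max x_step phi_cvg0 *.
  by case.
have lam_gt0 : 0 < lam.
  rewrite ltNge; apply/negP => lam_le0.
  have : 2 / lam <= 0 by rewrite mulr_ge0_le0 // invr_le0.
  by rewrite leNgt (lt_trans h_gt0 h_lt).
have hlam : h * lam < 2 by rewrite -ltr_pdivlMr.
have lap_bound z : dotv (z *m laplacian a) z <= lam * dotv z z.
  have [q [v [v0 vL qmax]]] := symmetric_top_eigen (tr_laplacian asym).
  apply: le_trans (qmax z) _; rewrite ler_wpM2r ?dotv_ge0 // lam_max //.
  by apply/eigenvalueP; exists v.
apply: (consensus asym apos conn lap_bound h_gt0 hlam) => // t i.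
by rewrite x_step /u_ addrA.
Qed.
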